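(* Let $G=(V,E)$ be an edge-weighted graph and consider a non-contractive embedding of its shortest-path metric $(V,d_V)$ into an HST $T$. Then for every $u,v\in V$, the set of edges $e=(x,y)\in E$ with $d_T(e)\ge d_T(u,v)$ is a cut-set for $u$ and $v$, i.e. every path in $G$ from $u$ to $v$ contains such an edge.
   Context: Here $d_T(e)$ for $e=(x,y)$ denotes the distance in $T$ between the images of $x$ and $y$, and $d_T(u,v)$ the distance between the images of $u,v$. An HST ($\mu$-HST, $\mu\ge1$... in the paper $\mu>1$) metric is the metric on the leaves of a rooted tree where each node $w$ has a label $\Delta(w)\ge0$, $\Delta(w)=0$ iff $w$ is a leaf, and $\Delta(w)\le\Delta(w')/\mu$ whenever $w$ is a child of $w'$; the distance between leaves is the label of their least common ancestor. The embedding maps points of $V$ to leaves and is non-contractive: $d_T(x,y)\ge d_V(x,y)$. *)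

From HB Require Import structures.
From mathcomp Require Import all_boot all_order all_algebra.
Set Implicit Arguments. Unset Strict Implicit. Unset Printing Implicit Defensive.
Import Order.TTheory GRing.Theory Num.Theory.
Local Open Scope ring_scope.

(* A graph on a finite vertex type V: edge relation E, weights w.
   A walk from x is a sequence p with path E x p; it ends at last x p.
   Its edges are the consecutive pairs zip (x :: p) p. *)
Definition walk_edges (V : Type) (x : V) (p : seq V) : seq (V * V) :=
  zip (x :: p) p.

Definition walk_length (R : numDomainType) (V : Type) (w : V -> V -> R)
  (x : V) (p : seq V) : R :=
  \sum_(e <- walk_edges x p) w e.1 e.2.

Definition is_sp_dist (R : numDomainType) (V : eqType) (E : rel V)
  (w : V -> V -> R) (x y : V) (d : R) : Prop :=
  (exists p : seq V, [/\ path E x p, last x p = y & walk_length w x p = d]) /\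
  (forall p : seq V, path E x p -> last x p = y -> d <= walk_length w x p).

(* A rooted tree on a finite node type N, given by a parent map [par]
   with root [r] (par r = r) such that every node reaches r. *)
Definition rooted_tree (N : finType) (par : N -> N) (r : N) : Prop :=
  par r = r /\ forall n : N, iter #|N| par n = r.

Definition ancestorb (N : finType) (par : N -> N) (a n : N) : bool :=
  [exists k : 'I_#|N|.+1, iter k par n == a].

Definition lca (N : finType) (par : N -> N) (x y : N) : N :=
  iter (find (fun k => ancestorb par (iter k par x) y) (iota 0 #|N|.+1))
       par x.

(* a leaf is a node that is nobody's parent (except possibly its own, for
   the root of a one-node tree). *)
Definition leafb (N : finType) (par : N -> N) (n : N) : bool :=
  [forall c : N, (c != n) ==> (par c != n)].

Definition is_HST (R : realFieldType) (N : finType) (par : N -> N) (r : N)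
  (Delta : N -> R) (mu : R) : Prop :=
  [/\ rooted_tree par r,
      1 < mu,
      (forall n, 0 <= Delta n),
      (forall n, Delta n = 0 <-> leafb par n) &
      (forall n, n != r -> Delta n <= Delta (par n) / mu)].

Definition hst_dist (R : realFieldType) (N : finType) (par : N -> N)
  (Delta : N -> R) (x y : N) : R :=
  Delta (lca par x y).

From HB Require Import structures.
From mathcomp Require Import all_boot all_order all_algebra.
Import Order.TTheory GRing.Theory Num.Theory.
Local Open Scope ring_scope.

(* The ancestors of a node form a chain along which the labels increase, so
   the HST distance is an ultrametric: d(a, c) <= max (d(a, b), d(b, c)).
   Splitting a u-v walk at its second vertex and inducting on the rest then
   yields an edge whose HST length is at least d_T(u, v). *)

Section UltrametricWalk.
Context {R : realDomainType} {T : Type} {d : T -> T -> R}.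
Hypothesis d_ultra : forall a b c, d a c <= Num.max (d a b) (d b c).

Lemma ultrametric_walk_edge x p : (0 < size p)%N ->
  has (fun e : T * T => d x (last x p) <= d e.1 e.2) (walk_edges x p).
Proof.
elim: p x => [//|y [|z q] IH] x _; first by rewrite /= lexx.
have := d_ultra x y (last z q); rewrite le_max => /orP [dxy|dyz].
  by rewrite /= dxy.
by apply/orP; right; apply: sub_has (IH y isT) => e; apply: le_trans dyz.
Qed.

End UltrametricWalk.

Section FunctionalGraph.
Context {T : finType} {f : T -> T}.

Lemma fconnect_iter_lt_card x y :
  fconnect f x y -> exists2 k, (k < #|T|)%N & iter k f x = y.
Proof.
move=> xy; exists (findex f x y); last exact: iter_findex.
exact: leq_trans (findex_max xy) (max_card _).
Qed.

Lemma ancestorbE a x : ancestorb f a x = fconnect f x a.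
Proof.
apply/existsP/idP => [[k /eqP <-]|/fconnect_iter_lt_card [k k_lt <-]].
  exact: fconnect_iter.
by exists (Ordinal (ltnW k_lt : (k < #|T|.+1)%N)).
Qed.

Lemma fconnect_total {x a b : T} :
  fconnect f x a -> fconnect f x b -> fconnect f a b || fconnect f b a.
Proof.
move=> /iter_findex <- /iter_findex <-.
move: (findex f x a) (findex f x b) => i j.
by case: (leqP i j) => [/subnK <-|/ltnW/subnK <-];
  rewrite iterD fconnect_iter ?orbT.
Qed.

End FunctionalGraph.

Section HSTUltrametric.
Context {R : realFieldType} {N : finType} {par : N -> N} {r : N}
  {Delta : N -> R} {mu : R}.
Hypothesis hst : is_HST par r Delta mu.

Lemma Delta_le_par n : Delta n <= Delta (par n).
Proof.
case: hst => [[par_r _] mu_gt1 Delta_ge0 _ Delta_par].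
have [->|n_r] := eqVneq n r; first by rewrite par_r.
apply: le_trans (Delta_par n n_r) _.
have mu_gt0 : 0 < mu by exact: lt_trans mu_gt1.
by rewrite ler_pdivrMr // ler_peMr ?Delta_ge0 // ltW.
Qed.

Lemma Delta_fconnect n m : fconnect par n m -> Delta n <= Delta m.
Proof.
move=> /iter_findex <-; elim: (findex par n m) => //= k IH.
exact: le_trans IH (Delta_le_par _).
Qed.

Lemma fconnect_root n : fconnect par n r.
Proof.
by case: hst => [[_ iter_r] _ _ _ _]; rewrite -(iter_r n) fconnect_iter.
Qed.

Lemma lcaE x y : lca par x y =
  iter (find (fun k => fconnect par y (iter k par x)) (iota 0 #|N|.+1)) par x.
Proof.
by rewrite /lca; congr iter; apply: eq_find => k; rewrite ancestorbE.
Qed.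

Lemma has_common_ancestor x y :
  has (fun k => fconnect par y (iter k par x)) (iota 0 #|N|.+1).
Proof.
case: hst => [[_ iter_r] _ _ _ _].
apply/hasP; exists #|N|; first by rewrite mem_iota add0n ltnSn.
by rewrite iter_r fconnect_root.
Qed.

Lemma fconnect_lca_l x y : fconnect par x (lca par x y).
Proof. exact: fconnect_iter. Qed.

Lemma fconnect_lca_r x y : fconnect par y (lca par x y).
Proof.
have has_xy := has_common_ancestor x y.
have k_lt := has_xy; rewrite has_find size_iota in k_lt.
by have := nth_find 0 has_xy; rewrite nth_iota // add0n -lcaE.
Qed.

Lemma Delta_lca_min x y m :
  fconnect par x m -> fconnect par y m -> Delta (lca par x y) <= Delta m.
Proof.
move=> /fconnect_iter_lt_card [j j_lt <-] y_j; rewrite lcaE.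
set k := find _ _.
have k_le_j : (k <= j)%N.
  rewrite leqNgt; apply/negP => /(before_find 0).
  by rewrite nth_iota ?add0n ?y_j // ltnS ltnW.
by apply: Delta_fconnect; rewrite -(subnK k_le_j) iterD fconnect_iter.
Qed.

Lemma hst_dist_ultra a b c : hst_dist par Delta a c <=
  Num.max (hst_dist par Delta a b) (hst_dist par Delta b c).
Proof.
rewrite /hst_dist le_max.
have /orP [ab_bc|bc_ab] :=
  fconnect_total (fconnect_lca_r a b) (fconnect_lca_l b c).
- apply/orP; right; apply: Delta_lca_min (fconnect_lca_r _ _).
  exact: connect_trans (fconnect_lca_l a b) ab_bc.
- apply/orP; left; apply: Delta_lca_min (fconnect_lca_l _ _) _.
  exact: connect_trans (fconnect_lca_r b c) bc_ab.
Qed.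

End HSTUltrametric.

Theorem proposition5p7 (R : realFieldType) (V : finType) (E : rel V)
  (w : V -> V -> R)
  (E_sym : symmetric E)
  (w_sym : forall x y, w x y = w y x)
  (w_pos : forall x y, E x y -> 0 < w x y)
  (N : finType) (par : N -> N) (r : N) (Delta : N -> R) (mu : R)
  (hst : is_HST par r Delta mu)
  (f : V -> N)
  (f_leaf : forall v, leafb par (f v))
  (noncontr : forall x y d, is_sp_dist E w x y d ->
      d <= hst_dist par Delta (f x) (f y))
  (u v : V) (uv : u != v)
  (p : seq V) (p_path : path E u p) (p_end : last u p = v)
  (p_simple : uniq (u :: p)) :
  has (fun e : V * V => hst_dist par Delta (f u) (f v)
                        <= hst_dist par Delta (f e.1) (f e.2))
      (walk_edges u p).
Proof.
have p_nonempty : (0 < size p)%N.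
  by move: uv; rewrite -p_end; case: (p) => //=; rewrite eqxx.
have d_ultra a b c := hst_dist_ultra hst (f a) (f b) (f c).
by have := ultrametric_walk_edge d_ultra u p p_nonempty; rewrite p_end.
Qed.
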